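(* Let $G_1,G_2$ be finite simple graphs with the same number of vertices. Then $\dim_{\mathbb{C}} Z(A_{G_1})=\dim_{\mathbb{C}} Z(A_{G_2})$ (i.e. they belong to the same Clifford class) if and only if their adjacency matrices, regarded as matrices over the field $\mathbb{F}_2$, have the same rank.
   Context: All graphs are finite, with no loops and no multiple edges. For a graph $G$ with vertices numbered $1,\dots,n$, the Clifford graph algebra $A_G$ is the unital associative $\mathbb{C}$-algebra generated by $e_1,\dots,e_n$ subject to the relations $e_i^2=-1$ for all $i$; $e_ie_j=-e_je_i$ if $i\neq j$ and vertices $i,j$ are adjacent; and $e_ie_j=e_je_i$ if $i\ne j$ and vertices $i,j$ are not adjacent. $Z(A)$ denotes the center. The adjacency matrix of $G$ is the $n\times n$ matrix $(a_{ij})$ with $a_{ij}=1$ if vertices $i,j$ are adjacent and $a_{ij}=0$ otherwise (so $a_{ii}=0$). *)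

From HB Require Import structures.
From mathcomp Require Import all_boot all_order all_algebra all_field.
Set Implicit Arguments. Unset Strict Implicit. Unset Printing Implicit Defensive.
Import Order.TTheory GRing.Theory Num.Theory.
Local Open Scope ring_scope.

(* A finite simple graph on vertex set 'I_n is a symmetric irreflexive
   relation [adj : rel 'I_n]. *)

Definition adjF2 (n : nat) (adj : rel 'I_n) : 'M['F_2]_n :=
  \matrix_(i, j) (adj i j)%:R.

(* Size of the monomial basis {e_S | S subset of vertices}. *)
Definition cliffN (n : nat) : nat := #|{set 'I_n}|.

(* Matrix of right multiplication by the generator e_i in the ordered
   monomial basis e_S = e_{s1} ... e_{sk} (s1 < ... < sk), acting on row
   vectors:  e_S * e_i = (-1)^(#{j in S | j > i, j adj i} + [i in S]) e_{S xor {i}}. *)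
Definition cliff_gen (n : nat) (adj : rel 'I_n) (i : 'I_n)
  : 'M[algC]_(cliffN n) :=
  \matrix_(r, c)
    (let S : {set 'I_n} := enum_val r in
     let T : {set 'I_n} := enum_val c in
     if T == (if i \in S then S :\ i else i |: S) then
       (-1) ^+ (#|[set j in S | (i < j)%N && adj i j]| + (i \in S))
     else 0).

Definition cliff_mono (n : nat) (adj : rel 'I_n) (S : {set 'I_n})
  : 'M[algC]_(cliffN n) :=
  \prod_(i <- enum S) cliff_gen adj i.

(* The Clifford graph algebra A_G, realised (faithfully, via its regular
   representation) as the subalgebra of square matrices spanned by all
   monomials in the generators, encoded as an mxalgebra space. *)
Definition cliff_alg (n : nat) (adj : rel 'I_n) : 'A[algC]_(cliffN n * cliffN n, cliffN n) :=
  (\sum_(S : {set 'I_n}) <<mxvec (cliff_mono adj S)>>)%MS.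

(* Its center Z(A_G) (mxalgebra's 'Z), a subspace whose rank is its
   dimension over the base field. *)
Definition cliff_center (n : nat) (adj : rel 'I_n) :=
  ('Z(cliff_alg adj))%MS.

From HB Require Import structures.
From mathcomp Require Import all_boot all_order all_algebra all_field.
From mathcomp Require Import mxabelem.
Set Implicit Arguments. Unset Strict Implicit. Unset Printing Implicit Defensive.
Import Order.TTheory GRing.Theory Num.Theory.
Local Open Scope ring_scope.

(* In the basis of ordered monomials e_S one has e_R e_S = sgn R S e_(R xor S),
   where sgn is a bicharacter for symmetric difference and
   sgn S R sgn R S = prod_(r in R) (-1)^#(neighbours of r in S).  Hence e_S
   commutes with every generator iff every vertex has an even number of
   neighbours in S, i.e. iff the indicator of S lies in the kernel of the
   adjacency matrix over F_2, and comparing coefficients in e_r x = x e_r shows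
   that a central x is supported on such S.  So dim Z(A_G) = 2^(n - rank A),
   which determines rank A. *)

Section SymmetricDifference.
Variable T : finType.
Implicit Types A B C : {set T}.

Definition symd A B : {set T} := [set x | (x \in A) != (x \in B)].

Lemma in_symd x A B : (x \in symd A B) = ((x \in A) != (x \in B)).
Proof. by rewrite inE. Qed.

Lemma symdC A B : symd A B = symd B A.
Proof. by apply/setP => x; rewrite !in_symd; do 2!case: (_ \in _). Qed.

Lemma symdA A B C : symd (symd A B) C = symd A (symd B C).
Proof. by apply/setP => x; rewrite !in_symd; do 3!case: (_ \in _). Qed.

Lemma sym0d A : symd set0 A = A.
Proof. by apply/setP => x; rewrite in_symd in_set0; case: (_ \in _). Qed.

Lemma symdKl A : cancel (symd A) (symd A).
Proof. by move=> B; apply/setP => x; rewrite !in_symd; do 2!case: (_ \in _). Qed.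

Lemma symd1 A x : symd A [set x] = if x \in A then A :\ x else x |: A.
Proof.
apply/setP => y; case: ifP => xA; rewrite !inE;
by case: (y =P x) => [->|]; rewrite ?xA //=; case: (y \in A).
Qed.

Lemma setI_symd A B : symd A B :&: A = A :\: B.
Proof. by apply/setP => x; rewrite !inE; do 2!case: (_ \in _). Qed.

Lemma setD_symd A B : symd A B :\: A = B :\: A.
Proof. by apply/setP => x; rewrite !inE; do 2!case: (_ \in _). Qed.

End SymmetricDifference.

Section SignProducts.
Variables (T : finType) (R : comPzRingType).

Lemma prod_signr_card (A : {set T}) (P : pred T) :
  \prod_(t in A) (if P t then -1 else 1 : R) = (-1) ^+ #|[set t in A | P t]|.
Proof. by rewrite -big_mkcondr -prodr_const; apply: eq_bigl => t; rewrite !inE. Qed.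

Lemma prod_sqr1 (I : finType) (P : pred I) (h : I -> R) :
  (forall i, h i * h i = 1) -> (\prod_(i in P) h i) * \prod_(i in P) h i = 1.
Proof. by move=> hh; rewrite -big_split /=; apply: big1 => i _; rewrite hh. Qed.

Lemma prod_symd (h : T -> R) (A B : {set T}) : (forall t, h t * h t = 1) ->
  \prod_(t in symd A B) h t = \prod_(t in A) h t * \prod_(t in B) h t.
Proof.
move=> hh; rewrite (big_setID A) setI_symd setD_symd.
rewrite [\prod_(t in A) _](big_setID B) [\prod_(t in B) _](big_setID A) setIC.
by rewrite mulrACA prod_sqr1 // mul1r.
Qed.

Variable f : T -> T -> R.
Hypothesis f_sqr : forall t s, f t s * f t s = 1.

Definition bichar (A B : {set T}) : R := \prod_(t in A) \prod_(s in B) f t s.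

Lemma bichar_sqr A B : bichar A B * bichar A B = 1.
Proof. by do 2!apply: prod_sqr1 => ?. Qed.

Lemma bichar0l B : bichar set0 B = 1.
Proof. by rewrite /bichar big_set0. Qed.

Lemma bichar0r A : bichar A set0 = 1.
Proof. by apply: big1 => t _; rewrite big_set0. Qed.

Lemma bichar_symdl A B C : bichar (symd A B) C = bichar A C * bichar B C.
Proof. by apply: prod_symd => t; apply: prod_sqr1. Qed.

Lemma bichar_symdr A B C : bichar A (symd B C) = bichar A B * bichar A C.
Proof. by rewrite /bichar -big_split; apply: eq_bigr => t _; apply: prod_symd. Qed.

End SignProducts.

Section MonomialMatrices.
Variable n : nat.
Local Notation N := (cliffN n).
Implicit Types R S T : {set 'I_n}.

Definition mono_mx S (w : {set 'I_n} -> algC) : 'M[algC]_N :=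
  \matrix_(r, c) (if enum_val c == symd (enum_val r) S then w (enum_val r) else 0).

Lemma eq_mono_mx S v w : v =1 w -> mono_mx S v = mono_mx S w.
Proof. by move=> vw; apply/matrixP => r c; rewrite !mxE vw. Qed.

Lemma mono_mx1 : mono_mx set0 (fun=> 1) = 1.
Proof.
apply/matrixP => r c; rewrite !mxE.
have -> : symd (enum_val r) set0 = enum_val r by rewrite symdC sym0d.
by rewrite (inj_eq enum_val_inj) eq_sym; case: eqP.
Qed.

Lemma mono_mxM R S v w :
  mono_mx R v *m mono_mx S w = mono_mx (symd R S) (fun T => v T * w (symd T R)).
Proof.
apply/matrixP => r c; rewrite !mxE (bigD1 (enum_rank (symd (enum_val r) R))) //=.
rewrite !mxE enum_rankK eqxx symdA big1 ?addr0 => [|k nk].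
  by case: (_ == _); rewrite ?mulr0.
rewrite !mxE; case: (enum_val k =P _) => [ek | _]; last by rewrite mul0r.
by move: nk; rewrite -ek enum_valK eqxx.
Qed.

End MonomialMatrices.

Section CliffordGraphAlgebra.
Variables (n : nat) (adj : rel 'I_n).
Local Notation N := (cliffN n).
Implicit Types (R S T : {set 'I_n}) (P : {set {set 'I_n}}).

(* [e_T e_S = sgn T S e_(symd T S)]: reordering moves each e_s of the right
   factor past every larger adjacent e_t of the left one, and e_s^2 = -1. *)
Definition pair_sign (t s : 'I_n) : algC :=
  if ((s < t)%N && adj s t) || (t == s) then -1 else 1.

Local Notation sgn := (bichar pair_sign).

Lemma pair_sign_sqr t s : pair_sign t s * pair_sign t s = 1.
Proof. by rewrite /pair_sign; case: ifP; rewrite ?mulrNN mulr1. Qed.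

Let sgn_symdl := bichar_symdl pair_sign_sqr.
Let sgn_symdr := bichar_symdr pair_sign_sqr.
Let sgn_sqr := bichar_sqr pair_sign_sqr.

Lemma sgn1 T i :
  sgn T [set i] = (-1) ^+ (#|[set j in T | (i < j)%N && adj i j]| + (i \in T)).
Proof.
have split_sign t : pair_sign t i =
    (if (i < t)%N && adj i t then -1 else 1) * (if t == i then -1 else 1).
  rewrite /pair_sign; case: eqP => [->|_]; first by rewrite ltnn mul1r.
  by rewrite orbF mulr1.
rewrite /bichar; under eq_bigr do rewrite big_set1 split_sign.
rewrite big_split /= !prod_signr_card exprD; congr (_ * _ ^+ _).
have -> : [set t in T | t == i] = T :&: [set i] by apply/setP => t; rewrite !inE.
case: (boolP (i \in T)) => iT; first by rewrite (setIidPr _) ?cards1 ?sub1set.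
rewrite (_ : _ :&: _ = set0) ?cards0 //.
by apply/setP => t; rewrite !inE; case: (t =P i) => [->|]; rewrite ?andbF ?(negbTE iT).
Qed.

Lemma cliff_gen_mono i : cliff_gen adj i = mono_mx [set i] (sgn^~ [set i]).
Proof. by apply/matrixP => r c; rewrite !mxE symd1 sgn1. Qed.

Lemma cliff_gen_prod (s : seq 'I_n) : sorted (fun i j : 'I_n => (i < j)%N) s ->
  \prod_(i <- s) cliff_gen adj i = mono_mx [set x in s] (sgn^~ [set x in s]).
Proof.
elim: s => [_ | i s IHs /= s_sorted].
  have -> : [set x in [::]] = set0 :> {set 'I_n} by apply/setP => x; rewrite !inE.
  rewrite big_nil -mono_mx1.
  by apply: eq_mono_mx => T; rewrite bichar0r.
have i_lt : all (fun j : 'I_n => (i < j)%N) s.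
  by apply: order_path_min s_sorted => ? ? ?; apply: ltn_trans.
have -> : [set x in i :: s] = symd [set i] [set x in s].
  apply/setP => x; rewrite in_symd !inE; case: eqP => [-> | _] /=; last by case: (x \in s).
  by case: (boolP (i \in s)) => // /(allP i_lt); rewrite ltnn.
have sgn_i_s : sgn [set i] [set x in s] = 1.
  rewrite /bichar big_set1; apply: big1 => y; rewrite inE => /(allP i_lt) lt_iy.
  rewrite /pair_sign ltnNge (ltnW lt_iy) /=; case: eqP => // eq_iy.
  by move: lt_iy; rewrite eq_iy ltnn.
rewrite big_cons IHs ?(path_sorted s_sorted) // cliff_gen_mono -mulmxE mono_mxM.
by apply: eq_mono_mx => T; rewrite sgn_symdl sgn_symdr sgn_i_s mulr1.
Qed.

Lemma cliff_monoE S : cliff_mono adj S = mono_mx S (sgn^~ S).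
Proof.
rewrite /cliff_mono cliff_gen_prod ?set_enum //.
rewrite /enum_mem; apply: sorted_filter => [? ? ?|]; first exact: ltn_trans.
by have := iota_ltn_sorted 0 n; rewrite -val_enum_ord sorted_map enumT.
Qed.

Lemma cliff_monoM R S :
  cliff_mono adj R *m cliff_mono adj S = sgn R S *: cliff_mono adj (symd R S).
Proof.
rewrite !cliff_monoE mono_mxM; apply/matrixP => r c; rewrite !mxE.
case: (_ == _); rewrite ?mulr0 // sgn_symdl sgn_symdr.
by rewrite [RHS]mulrC -mulrA.
Qed.

Lemma cliff_mono_row0 S T :
  cliff_mono adj S (enum_rank set0) (enum_rank T) = (T == S)%:R.
Proof.
by rewrite cliff_monoE mxE !enum_rankK sym0d bichar0l; case: (T == S).
Qed.

Lemma cliff_mono_in_alg S : (cliff_mono adj S \in cliff_alg adj)%MS.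
Proof. by apply: (sumsmx_sup S) => //; rewrite genmxE. Qed.

Definition cliff_elt (d : {set 'I_n} -> algC) : 'M[algC]_N :=
  \sum_S d S *: cliff_mono adj S.

Lemma cliff_alg_decomp x : (x \in cliff_alg adj)%MS ->
  exists d, x = cliff_elt d.
Proof.
move=> /sub_sumsmxP [u xE]; set v := fun S => mxvec (cliff_mono adj S) in xE.
exists (fun S => (u S *m <<v S>>%MS *m pinvmx (v S)) 0 0).
apply: (can_inj mxvecK); rewrite xE linear_sum; apply: eq_bigr => S _.
rewrite linearZ /= -mul_scalar_mx -mx11_scalar mulmxKpV //.
by rewrite (submx_trans (submxMl _ _)) ?genmxE.
Qed.

Lemma cliff_elt_coef d T : cliff_elt d (enum_rank set0) (enum_rank T) = d T.
Proof.
rewrite summxE (bigD1 T) //= mxE cliff_mono_row0 eqxx mulr1 big1 ?addr0 // => S nST.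
by rewrite mxE cliff_mono_row0 eq_sym (negbTE nST) mulr0.
Qed.

Lemma mulmx_cliff_elt R d : cliff_mono adj R *m cliff_elt d =
  cliff_elt (fun S => d (symd R S) * sgn R (symd R S)).
Proof.
rewrite /cliff_elt mulmx_sumr (reindex_inj (can_inj (symdKl R))); apply: eq_bigr => S _.
by rewrite -scalemxAr cliff_monoM symdKl scalerA.
Qed.

Lemma cliff_elt_mulmx R d : cliff_elt d *m cliff_mono adj R =
  cliff_elt (fun S => d (symd R S) * sgn (symd R S) R).
Proof.
rewrite /cliff_elt mulmx_suml (reindex_inj (can_inj (symdKl R))); apply: eq_bigr => S _.
by rewrite -scalemxAl cliff_monoM [symd (symd R S) R]symdC symdKl scalerA.
Qed.

Lemma commute_cliff_elt_coef R d T :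
    cliff_mono adj R *m cliff_elt d = cliff_elt d *m cliff_mono adj R ->
  d T * sgn R T = d T * sgn T R.
Proof.
move/(congr1 (fun y : 'M_N => y (enum_rank set0) (enum_rank (symd R T)))).
by rewrite mulmx_cliff_elt cliff_elt_mulmx !cliff_elt_coef symdKl.
Qed.

Hypotheses (adj_sym : symmetric adj) (adj_irr : irreflexive adj).

Lemma sgn_commutator S R :
  sgn S R * sgn R S = \prod_(r in R) (-1) ^+ #|[set s in S | adj s r]|.
Proof.
rewrite /bichar [X in X * _]exchange_big -big_split; apply: eq_bigr => r _.
rewrite -big_split -prod_signr_card; apply: eq_bigr => s _.
rewrite /pair_sign; case: (ltngtP s r) => [lt_sr | lt_rs | /val_inj ->].
- have ne_sr : (s == r) = false := ltn_eqF lt_sr.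
  by rewrite ne_sr eq_sym ne_sr !orbF /= mul1r.
- have ne_sr : (s == r) = false := gtn_eqF lt_rs.
  by rewrite ne_sr eq_sym ne_sr !orbF /= mulr1 adj_sym.
- by rewrite eqxx adj_irr /= mulrNN mulr1.
Qed.

Definition even_sets : {set {set 'I_n}} :=
  [set S : {set 'I_n} | [forall r : 'I_n, ~~ odd #|[set s in S | adj s r]|]].

Lemma sgn_swap S R :
  sgn R S = sgn S R * \prod_(r in R) (-1) ^+ #|[set s in S | adj s r]|.
Proof. by rewrite -sgn_commutator mulrA sgn_sqr mul1r. Qed.

Lemma sgnC_even S R : S \in even_sets -> sgn R S = sgn S R.
Proof.
rewrite inE => /forallP S_even; rewrite sgn_swap big1 ?mulr1 // => r _.
by rewrite -signr_odd (negbTE (S_even r)).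
Qed.

Lemma sgnC_odd S r :
  odd #|[set s in S | adj s r]| -> sgn [set r] S = - sgn S [set r].
Proof. by move=> odd_r; rewrite sgn_swap big_set1 -signr_odd odd_r mulrN1. Qed.

Lemma cliff_mono_comm R S : S \in even_sets ->
  cliff_mono adj R *m cliff_mono adj S = cliff_mono adj S *m cliff_mono adj R.
Proof. by move=> S_even; rewrite !cliff_monoM symdC sgnC_even. Qed.

Lemma cliff_center_coef0 d T :
  (cliff_elt d \in cliff_center adj)%MS -> T \notin even_sets -> d T = 0.
Proof.
case/center_mxP => _ d_central; rewrite inE negb_forall => /existsP [r].
rewrite negbK => odd_r.
have := commute_cliff_elt_coef T (d_central _ (cliff_mono_in_alg [set r])).
rewrite sgnC_odd // mulrN; set y := d T * _ => y_opp.
have /eqP : y *+ 2 = 0 by rewrite mulr2n -{1}y_opp addNr.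
rewrite mulrn_eq0 /= => /eqP y0.
by rewrite -[d T]mulr1 -(sgn_sqr T [set r]) mulrA -/y y0 mul0r.
Qed.

Definition mono_rows P : 'M[algC]_(#|P|, N * N) :=
  \matrix_(k < #|P|) mxvec (cliff_mono adj (enum_val k)).

Lemma row_free_mono_rows P : row_free (mono_rows P).
Proof.
apply/row_freeP.
exists (\matrix_(j, k) (j == mxvec_index (enum_rank set0) (enum_rank (enum_val k)))%:R).
apply/matrixP => a b; rewrite !mxE.
rewrite (bigD1 (mxvec_index (enum_rank set0) (enum_rank (enum_val b)))) //=.
rewrite big1 ?addr0 => [|j /negbTE nj]; last by rewrite !mxE nj mulr0.
by rewrite !mxE eqxx mulr1 mxvecE cliff_mono_row0 (inj_eq enum_val_inj) eq_sym.
Qed.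

Lemma sub_mono_rows P S :
  S \in P -> (mxvec (cliff_mono adj S) <= mono_rows P)%MS.
Proof.
move=> SP; rewrite -(enum_rankK_in SP SP).
by rewrite -(rowK (fun k => mxvec (cliff_mono adj (enum_val k)))) row_sub.
Qed.

Lemma cliff_centerE : (cliff_center adj :=: mono_rows even_sets)%MS.
Proof.
apply/eqmxP/andP; split; apply/row_subP.
- move=> i; rewrite -[row i _]vec_mxK.
  have /[dup] /center_mxP [/cliff_alg_decomp [d ->] _] :
    (vec_mx (row i (cliff_center adj)) \in cliff_center adj)%MS by rewrite vec_mxK row_sub.
  move=> d_central; rewrite linear_sum summx_sub // => S _; rewrite linearZ /=.
  have [S_even | S_odd] := boolP (S \in even_sets).
    by rewrite scalemx_sub ?sub_mono_rows.
  by rewrite (cliff_center_coef0 d_central S_odd) /= scale0r sub0mx.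
- move=> k; rewrite rowK; apply/center_mxP; split; first exact: cliff_mono_in_alg.
  move=> B /cliff_alg_decomp [d ->]; rewrite mulmx_suml mulmx_sumr.
  by apply: eq_bigr => S _; rewrite -scalemxAl -scalemxAr cliff_mono_comm ?enum_valP.
Qed.

Lemma rank_cliff_center : \rank (cliff_center adj) = #|even_sets|.
Proof. by rewrite cliff_centerE; apply/eqP/row_free_mono_rows. Qed.

End CliffordGraphAlgebra.

Section EvenSetsCount.
Variables (n : nat) (adj : rel 'I_n).

Definition set_row (S : {set 'I_n}) : 'rV['F_2]_n := \row_j (j \in S)%:R.

Lemma set_row_inj : injective set_row.
Proof.
move=> S T /rowP eqST; apply/setP => j; have := eqST j; rewrite !mxE.
by do 2!case: (_ \in _).
Qed.

Lemma F2_natr_eq0 m : ((m%:R : 'F_2) == 0) = ~~ odd m.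
Proof. by rewrite -(Fp_nat_mod (isT : prime 2)) modn2; case: (odd m). Qed.

Lemma set_row_support (u : 'rV['F_2]_n) : u = set_row [set j | u 0 j != 0].
Proof.
by apply/rowP => j; rewrite !mxE inE; apply: val_inj; case: (u 0 j) => [[|[|k]] //=].
Qed.

Lemma set_row_mul_adj S r :
  (set_row S *m adjF2 adj) 0 r = #|[set s in S | adj s r]|%:R.
Proof.
rewrite mxE -sum1_card natr_sum [RHS]big_mkcond; apply: eq_bigr => j _.
rewrite !mxE inE.
by case: (j \in S); case: (adj j r); rewrite /= ?mulr1n ?mulr0n ?mulr1 ?mulr0.
Qed.

Lemma card_even_sets : #|even_sets adj| = (2 ^ (n - \rank (adjF2 adj)))%N.
Proof.
have -> : (2 ^ (n - \rank (adjF2 adj)))%N = #|rowg (kermx (adjF2 adj))|.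
  by rewrite card_rowg mxrank_ker card_Fp.
rewrite -(card_imset _ set_row_inj).
apply: eq_card => u; rewrite mem_rowg sub_kermx.
apply/imsetP/idP => [[S S_even ->] | /eqP uA0].
  apply/eqP/rowP => r; rewrite set_row_mul_adj mxE; apply/eqP; rewrite F2_natr_eq0.
  by move: S_even; rewrite inE => /forallP.
exists [set j | u 0 j != 0]; last exact: set_row_support.
rewrite inE; apply/forallP => r; rewrite -F2_natr_eq0 -set_row_mul_adj.
by rewrite -set_row_support uA0 mxE.
Qed.

End EvenSetsCount.

Theorem mainTheorem5 (n : nat) (G1 G2 : rel 'I_n)
  (sym1 : symmetric G1) (irr1 : irreflexive G1)
  (sym2 : symmetric G2) (irr2 : irreflexive G2) :
  \rank (cliff_center G1) = \rank (cliff_center G2) <->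
  \rank (adjF2 G1) = \rank (adjF2 G2).
Proof.
rewrite (rank_cliff_center sym1 irr1) (rank_cliff_center sym2 irr2) !card_even_sets.
split => [/(expnI (isT : (1 < 2)%N)) eq_corank | -> //].
by rewrite -(subKn (rank_leq_row (adjF2 G1))) eq_corank subKn ?rank_leq_row.
Qed.
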